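(* There exists a universal constant $C<\infty$ such that for any normed space $(F,\|\cdot\|)$, any symmetric matrix $(a_{ij})_{i,j\le n}$ with entries in $F$, i.i.d. $\mathcal N(0,1)$ random variables $g_1,\dots,g_n$ and any $p\ge1$, \begin{align*} \sqrt{p}\sup_{\|x\|_2\leq 1}\mathbb{E}\Big\|\sum_{i}a_{ ii}x_ig_i\Big\| \leq C\Bigg(\mathbb{E}\Big\|\sum_{i,j}a_{ij}(g_ig_j-\delta_{ij})\Big\| +\sqrt{p}\sup_{\|(x_{ij})\|_2\leq 1}\Big\|\sum_{i,j}a_{ij}x_{ij}\Big\| + p\sup_{\|x\|_2\leq 1,\|y\|_2\leq 1}\Big\|\sum_{i,j}a_{ij}x_iy_j\Big\|\Bigg). \end{align*}
   Context: $\delta_{ij}$ is the Kronecker delta; sums run over $\{1,\dots,n\}$; suprema are over $x,y\in\mathbb{R}^n$ of Euclidean norm at most $1$ and real arrays $(x_{ij})$ with $\sum x_{ij}^2\le1$. *)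

From HB Require Import structures.
From mathcomp Require Import all_boot all_order all_algebra.
From mathcomp Require Import all_classical all_reals all_analysis.
From mathcomp Require Import Rstruct Rstruct_topology.
Set Implicit Arguments. Unset Strict Implicit. Unset Printing Implicit Defensive.
Import Order.TTheory GRing.Theory Num.Theory.
Local Open Scope classical_set_scope.
Local Open Scope ring_scope.

Definition mutually_independent_RV {d} {T : measurableType d} {R : realType}
  (P : probability T R) (I : finType) (g : I -> {RV P >-> R}) : Prop :=
  forall (J : {set I}) (B : I -> set R), (forall i, measurable (B i)) ->
    P (\bigcap_(i in [set i | i \in J]) (g i @^-1` B i)) =
    (\prod_(i in J) P (g i @^-1` B i))%E.

Definition std_gaussian_RV {d} {T : measurableType d} {R : realType}
  (P : probability T R) (X : {RV P >-> R}) : Prop :=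
  forall A : set R, measurable A -> distribution P X A = normal_prob 0 1 A.

Definition unit_ball_vec {R : realType} (n : nat) : set ('I_n -> R) :=
  [set x | \sum_(i < n) x i ^+ 2 <= 1].

Definition unit_ball_mat {R : realType} (n : nat) : set ('I_n -> 'I_n -> R) :=
  [set x | \sum_(i < n) \sum_(j < n) x i j ^+ 2 <= 1].

From HB Require Import structures.
From mathcomp Require Import all_boot all_order all_algebra.
From mathcomp Require Import all_classical all_reals all_analysis.
From mathcomp Require Import Rstruct Rstruct_topology.
From mathcomp Require Import ring lra measurable_realfun.
Set Implicit Arguments.
Unset Strict Implicit.
Unset Printing Implicit Defensive.

Import Order.TTheory GRing.Theory Num.Theory.
Local Open Scope classical_set_scope.
Local Open Scope ring_scope.

(* The diagonal term is dominated by the Hilbert-Schmidt term alone. If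
   |sum_ij x_ij a_ij| <= r on the unit ball of arrays, testing on the diagonal
   array c diag(y) gives |sum_i y_i a_ii| <= r |y|_2 <= r (1 + |y|_2^2) / 2.
   Taking y_i = x_i g_i and using E g_i^2 <= 16/3 (a crude bound, obtained by
   comparing the N(0,1) and N(0,2) densities) yields
   E |sum_i a_ii x_i g_i| <= 4 r, so the inequality holds with C = 4. *)

Section gaussian_second_moment.
Context {R : realType}.

Lemma normal_pdf01_sqr_le (x : R) :
  x ^+ 2 * normal_pdf 0 1 x <= 16 / 3 * normal_pdf 0 2 x.
Proof.
rewrite /normal_pdf oner_eq0 pnatr_eq0 /= /normal_fun /normal_peak !subr0 expr1n mul1r.
set s := Num.sqrt (pi *+ 2).
have s_gt0 : 0 < s by rewrite sqrtr_gt0 mulrn_wgt0 // pi_gt0.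
have -> : Num.sqrt ((2 : R) ^+ 2 * pi *+ 2) = 2 * s.
  by rewrite -mulrnAr sqrtrM ?sqr_ge0 // sqrtr_sqr ger0_norm.
(* split [exp(-x^2/2)] as [exp(-x^2/8) exp(-3x^2/8)] and use [1 + t <= exp t] *)
set t := x ^+ 2 * (3 / 8).
have -> : - x ^+ 2 / 2 = - x ^+ 2 / ((2 : R) ^+ 2 *+ 2) - t by rewrite /t; field.
rewrite exp.expRD.
have sqr_expN_le : x ^+ 2 * expR (- t) <= 8 / 3.
  have := expR_ge1Dx t; have := expR_gt0 t.
  rewrite expRN (_ : x ^+ 2 = t * (8 / 3)); last by rewrite /t; field.
  by move=> ? ?; rewrite ler_pdivrMr //; lra.
set E := expR (- x ^+ 2 / ((2 : R) ^+ 2 *+ 2)).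
have sE_ge0 : 0 <= s^-1 * E by rewrite mulr_ge0 ?invr_ge0 ?expR_ge0 // ltW.
rewrite invfM (_ : 16 / 3 * _ = 8 / 3 * (s^-1 * E)); last by field; rewrite gt_eqF.
rewrite (_ : x ^+ 2 * _ = x ^+ 2 * expR (- t) * (s^-1 * E)); last by ring.
exact: ler_wpM2r.
Qed.

Lemma normal_prob01_second_moment_le :
  (\int[normal_prob (0 : R) 1]_x (x ^+ 2)%:E <= (16 / 3 : R)%:E)%E.
Proof.
(* [normal_prob] is only known through integrals of its density over sets;
   the Radon-Nikodym derivative turns this into a change of integrand. *)
have dom := normal_prob_dominates (0 : R) 1.
have msqr : measurable_fun [set: R] (fun x : R => (x ^+ 2)%:E).
  by apply/measurable_EFinP; exact: measurable_funX.
have mpdf (s : R) : measurable_fun [set: R] (fun x => (normal_pdf 0 s x)%:E).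
  by apply/measurable_EFinP; exact: measurable_normal_pdf.
rewrite -(Radon_Nikodym_SigmaFinite.change_of_variables dom) //; last first.
  by move=> x; rewrite lee_fin sqr_ge0.
set RN := Radon_Nikodym_SigmaFinite.f _ _.
have RN_int := Radon_Nikodym_SigmaFinite.f_integrable dom.
have RN_pdf : ae_eq lebesgue_measure setT RN (fun x => (normal_pdf (0 : R) 1 x)%:E).
  apply: integral_ae_eq => //.
  - exact: mpdf.
  - by move=> A _ mA; rewrite -Radon_Nikodym_SigmaFinite.f_integral.
have -> : (\int[lebesgue_measure]_x ((x ^+ 2)%:E * RN x) =
            \int[lebesgue_measure]_x ((x ^+ 2)%:E * (normal_pdf (0 : R) 1 x)%:E))%E.
  apply: ae_eq_integral => //.
  - by apply: emeasurable_funM => //; exact: measurable_int RN_int.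
  - exact: emeasurable_funM msqr (mpdf 1).
  - exact: ae_eqe_mul2l RN_pdf.
apply: (@le_trans _ _ (\int[lebesgue_measure]_x ((16 / 3 : R)%:E * (normal_pdf (0 : R) 2 x)%:E))%E).
  apply: ge0_le_integral => //.
  - by move=> x _; rewrite -EFinM lee_fin mulr_ge0 ?sqr_ge0 ?normal_pdf_ge0.
  - exact: emeasurable_funM msqr (mpdf 1).
  - by apply: emeasurable_funM => //; exact: mpdf.
  - by move=> x _; rewrite -!EFinM lee_fin normal_pdf01_sqr_le.
rewrite ge0_integralZl_EFin // ?integral_normal_pdf ?mule1 //.
- by move=> x _; rewrite lee_fin normal_pdf_ge0.
- exact: mpdf.
Qed.

(* [normal_prob] lives on [measurableTypeR R], the law of an [{RV P >-> R}]
   on [R]: the two are compared through the identity map [idTR]. *)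
Let idTR : measurableTypeR R -> R := idfun.

#[local] HB.instance Definition _ :=
  @isMeasurableFun.Build _ _ _ _ idTR (@measurable_id _ _ setT).

Lemma std_gaussian_second_moment_le {d} {T : measurableType d}
    (P : probability T R) (X : {RV P >-> R}) :
  std_gaussian_RV X -> (\int[P]_w (X w ^+ 2)%:E <= (16 / 3 : R)%:E)%E.
Proof.
move=> gaussX.
have msqr : measurable_fun [set: R] (fun y : R => (y ^+ 2)%:E).
  by apply/measurable_EFinP; exact: measurable_funX.
have sqr_e_ge0 (y : R) : (0 <= (y ^+ 2)%:E)%E by rewrite lee_fin sqr_ge0.
rewrite -(ge0_integral_distribution X msqr sqr_e_ge0).
rewrite (eq_measure_integral (distribution (normal_prob 0 1) idTR)) => [|A mA _].
  rewrite ge0_integral_distribution //; exact: normal_prob01_second_moment_le.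
exact: gaussX.
Qed.

End gaussian_second_moment.

(* The nonnegative integral is a supremum over simple functions below the
   integrand, so monotonicity needs no measurability. *)
Lemma ge0_le_integral_nonmeasurable {d} {T : measurableType d} {R : realType}
    (mu : {measure set T -> \bar R}) (f1 f2 : T -> \bar R) :
  (forall x, (0 <= f1 x)%E) -> (forall x, (f1 x <= f2 x)%E) ->
  (\int[mu]_x f1 x <= \int[mu]_x f2 x)%E.
Proof.
move=> f1_ge0 f12.
rewrite !ge0_integralE //; last by move=> x _; exact: le_trans (f12 x).
apply: ereal_sup_le => _ /= [h hf1 <-]; exists h => //= x.
by apply: le_trans (hf1 x) _; rewrite /patch; case: ifP => _ //; exact: f12.
Qed.

Section diagonal_domination.
Context {R : realType} (F : normedModType R) (n : nat) (a : 'I_n -> 'I_n -> F).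
Variable r : R.
Hypothesis norm_hs_le : forall X : 'I_n -> 'I_n -> R, unit_ball_mat X ->
  `|\sum_(i < n) \sum_(j < n) X i j *: a i j| <= r.

Lemma hs_bound_ge0 : 0 <= r.
Proof.
apply: le_trans (@norm_hs_le (fun _ _ => 0) _); first exact: normr_ge0.
by rewrite /unit_ball_mat /= big1 // => i _; rewrite big1 // => j _; rewrite expr0n.
Qed.

Lemma norm_diag_sum_le (y : 'I_n -> R) :
  `|\sum_(i < n) y i *: a i i| <= r / 2 * (1 + \sum_(i < n) y i ^+ 2).
Proof.
set Q := \sum_(i < n) y i ^+ 2.
have Q_ge0 : 0 <= Q by apply: sumr_ge0 => i _; exact: sqr_ge0.
set c := 2 / (1 + Q).
have c_gt0 : 0 < c by rewrite divr_gt0 // ltr_pwDl.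
pose X i j := if j == i then c * y i else 0.
have X_sqr i : \sum_(j < n) X i j ^+ 2 = (c * y i) ^+ 2.
  by rewrite (bigD1 i) //= /X eqxx big1 ?addr0 // => j /negbTE ->; rewrite expr0n.
have X_scale i : \sum_(j < n) X i j *: a i j = (c * y i) *: a i i.
  by rewrite (bigD1 i) //= /X eqxx big1 ?addr0 // => j /negbTE ->; rewrite scale0r.
(* [c^2 Q <= 1] is the AM-GM inequality [4 Q <= (1 + Q)^2] *)
have X_in_ball : unit_ball_mat X.
  rewrite /unit_ball_mat /=; under eq_bigr do rewrite X_sqr.
  under eq_bigr do rewrite exprMn; rewrite -mulr_sumr -/Q.
  rewrite /c expr_div_n mulrAC ler_pdivrMr ?exprn_gt0 ?ltr_pwDl // mul1r.
  have : 0 <= (1 - Q) ^+ 2 by exact: sqr_ge0.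
  by rewrite !expr2; lra.
have := norm_hs_le X_in_ball; under eq_bigr do rewrite X_scale.
under eq_bigr do rewrite -scalerA; rewrite -scaler_sumr normrZ gtr0_norm //.
have -> : r / 2 * (1 + Q) = r / c by rewrite /c invf_div mulrA mulrAC.
by rewrite ler_pdivlMr // mulrC.
Qed.

Lemma expectation_norm_diag_gauss_le {d} {T : measurableType d}
    (P : probability T R) (g : 'I_n -> {RV P >-> R}) (x : 'I_n -> R) :
  (forall i, std_gaussian_RV (g i)) -> unit_ball_vec x ->
  ('E_P[fun w => (`|\sum_(i < n) (x i * g i w) *: a i i|)%R] <= (4 * r)%:E)%E.
Proof.
move=> gauss x_in_ball; have r_ge0 := hs_bound_ge0.
have msqr i : measurable_fun [set: T] (fun w => ((x i * g i w) ^+ 2)%:E).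
  by apply/measurable_EFinP; apply: measurable_funX; exact: measurable_funM.
have sqr_e_ge0 i w : (0 <= ((x i * g i w) ^+ 2)%:E)%E by rewrite lee_fin sqr_ge0.
have sum_ge0 w : (0 <= \sum_(i < n) ((x i * g i w) ^+ 2)%:E)%E.
  by apply: sume_ge0 => i _.
have second_moment : (\int[P]_w (\sum_(i < n) ((x i * g i w) ^+ 2)%:E)
    <= (16 / 3 : R)%:E)%E.
  rewrite ge0_integral_sum //.
  apply: (@le_trans _ _ (\sum_(i < n) (x i ^+ 2 * (16 / 3 : R))%:E)%E).
    apply: lee_sum => i _; under eq_integral do rewrite exprMn EFinM.
    rewrite ge0_integralZl_EFin //; last 3 first.
    - by move=> w _; rewrite lee_fin sqr_ge0.
    - by apply/measurable_EFinP; exact: measurable_funX.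
    - exact: sqr_ge0.
    rewrite [leRHS]EFinM; apply: lee_wpmul2l (std_gaussian_second_moment_le (gauss i)).
    by rewrite lee_fin sqr_ge0.
  by rewrite sumEFin lee_fin -mulr_suml; move: x_in_ball; rewrite /unit_ball_vec /=; lra.
rewrite unlock; apply: le_trans (ge0_le_integral_nonmeasurable P (f2 := fun w =>
    ((r / 2)%:E * (1 + \sum_(i < n) ((x i * g i w) ^+ 2)%:E))%E) _ _) _.
- by move=> w; rewrite lee_fin.
- move=> w; rewrite sumEFin -EFinD -EFinM lee_fin.
  exact: (norm_diag_sum_le (fun i => x i * g i w)).
rewrite ge0_integralZl_EFin ?divr_ge0 //; last 2 first.
- by move=> w _; exact: adde_ge0.
- by apply: emeasurable_funD => //; exact: emeasurable_sum.
rewrite ge0_integralD //; last exact: emeasurable_sum.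
rewrite integral_cst // [X in (1 * X)%E](_ : _ = 1%E); last exact: probability_setT.
rewrite mul1e; apply: (@le_trans _ _ ((r / 2)%:E * (1 + 16 / 3 : R)%:E)%E).
  by apply: lee_wpmul2l; rewrite ?lee_fin ?divr_ge0 // EFinD leeD2l.
by rewrite -EFinM lee_fin; lra.
Qed.

End diagonal_domination.

Lemma sup_expectation_norm_diag_gauss_le {R : realType} (F : normedModType R)
    (n : nat) (a : 'I_n -> 'I_n -> F) {d} {T : measurableType d}
    (P : probability T R) (g : 'I_n -> {RV P >-> R}) :
  (forall i, std_gaussian_RV (g i)) ->
  (ereal_sup [set 'E_P[fun w => (`|\sum_(i < n) (x i * g i w) *: a i i|)%R]
             | x in @unit_ball_vec _ n]
   <= 4%:E * ereal_sup [set (`|\sum_(i < n) \sum_(j < n) x i j *: a i j|)%R%:E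
                       | x in @unit_ball_mat _ n])%E.
Proof.
move=> gauss; set S := (X in (_ <= _ * X)%E).
have zero_in_ball : @unit_ball_mat R n (fun _ _ => 0).
  by rewrite /unit_ball_mat /= big1 // => i _; rewrite big1 // => j _; rewrite expr0n.
have S_ge0 : (0 <= S)%E.
  apply: ereal_sup_ubound; exists (fun _ _ => 0) => //.
  by rewrite big1 ?normr0 // => i _; rewrite big1 // => j _; rewrite scale0r.
case ES : S S_ge0 => [r| |] // _.
- apply: ge_ereal_sup => _ [x x_in_ball <-]; rewrite -EFinM.
  apply: expectation_norm_diag_gauss_le => // X X_in_ball.
  by rewrite -lee_fin -ES; apply: ereal_sup_ubound; exists X.
- by rewrite mulry gtr0_sg // mul1e leey.
Qed.

Theorem proposition4p2 :
  exists C : Rdefinitions.R,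
  forall (F : normedModType Rdefinitions.R) (n : nat) (a : 'I_n -> 'I_n -> F)
    (d : measure_display) (T : measurableType d)
    (P : probability T Rdefinitions.R) (g : 'I_n -> {RV P >-> (Rdefinitions.R : realType)})
    (p : Rdefinitions.R),
  (forall i j, a i j = a j i) ->
  mutually_independent_RV g ->
  (forall i, std_gaussian_RV (g i)) ->
  1 <= p ->
  ((Num.sqrt p)%:E *
     ereal_sup [set 'E_P[fun w => (`| \sum_(i < n) (x i * g i w) *: a i i |)%R]
               | x in @unit_ball_vec _ n]
   <= C%:E *
     ('E_P[fun w => (`| \sum_(i < n) \sum_(j < n)
                         (g i w * g j w - (i == j)%:R) *: a i j |)%R]
      + (Num.sqrt p)%:E *
          ereal_sup [set (`| \sum_(i < n) \sum_(j < n) x i j *: a i j |)%R%:E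
                    | x in @unit_ball_mat _ n]
      + p%:E *
          ereal_sup [set (`| \sum_(i < n) \sum_(j < n) (x i * y j) *: a i j |)%R%:E
                    | x in @unit_ball_vec _ n & y in @unit_ball_vec _ n]))%E.
Proof.
exists 4 => F n a d T P g p _ _ gauss p_ge1.
have sqrtp_ge0 : (0 <= (Num.sqrt p)%:E)%E by rewrite lee_fin sqrtr_ge0.
have chaos_ge0 : (0 <= 'E_P[fun w => (`| \sum_(i < n) \sum_(j < n)
                         (g i w * g j w - (i == j)%:R) *: a i j |)%R])%E.
  by rewrite unlock; apply: integral_ge0 => w _; rewrite lee_fin normr_ge0.
have zero_in_ball : @unit_ball_vec Rdefinitions.R n (fun _ => 0).
  by rewrite /unit_ball_vec /= big1 // => i _; rewrite expr0n.
have bilinear_ge0 : (0 <= p%:E * ereal_sup [set (`| \sum_(i < n) \sum_(j < n)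
    (x i * y j) *: a i j |)%R%:E | x in @unit_ball_vec _ n & y in @unit_ball_vec _ n])%E.
  rewrite mule_ge0 ?lee_fin //; first lra.
  apply: ereal_sup_ubound; exists (fun _ => 0) => //; exists (fun _ => 0) => //.
  by rewrite big1 ?normr0 // => i _; rewrite big1 // => j _; rewrite mul0r scale0r.
apply: le_trans (lee_wpmul2l sqrtp_ge0 (sup_expectation_norm_diag_gauss_le a gauss)) _.
rewrite muleCA; apply: lee_wpmul2l; first by rewrite lee_fin.
by apply: le_trans (leeDr _ chaos_ge0) _; exact: leeDl.
Qed.
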